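(* Let $D$ be a commutative $k$-algebra satisfying the sensitive multiplicity condition, let $\sigma$ be an automorphism of $D$ which is not locally algebraic, and let $a\in D$. Then $\operatorname{GKdim}(D(\sigma,a))\geq \operatorname{GKdim}(D)+2$.
   Context: $k$ is a field. The generalized Weyl algebra $D(\sigma,a)$ (for $a$ central) is generated by $D$ and indeterminates $x,y$ with $xd=\sigma(d)x$, $yd=\sigma^{-1}(d)y$ ($d\in D$), $yx=a$, $xy=\sigma(a)$. $\operatorname{GKdim}(B)=\sup_V\limsup_{n\to\infty}\log_n\dim_k(\sum_{i=0}^nV^i)$. An element $r$ of an algebra $B$ is regular if $rb\neq0$ and $br\neq0$ for all $0\neq b\in B$. An algebra $B$ with $\operatorname{GKdim}(B)=d$ satisfies $\mathrm{SM}(V_0,c,d)$, for a finite-dimensional subspace $V_0\subseteq B$ and a constant $c>0$, if for every finite-dimensional subspace $W\subseteq B$ with $V_0r\subseteq W$ for some regular element $r\in B$ one has $\dim(W^m)\geq c\dim(W)m^d$ for all $m\in\mathbb{N}$ (here $W^0=k$). $B$ satisfies the sensitive multiplicity condition if it satisfies $\mathrm{SM}(V_0,c,d)$ for some such $V_0$ and $c$, where $d=\operatorname{GKdim}(B)$. An automorphism $\sigma$ is locally algebraic if every finite-dimensional subspace lies in a finite-dimensional $\sigma$-stable subspace. *)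

From HB Require Import structures.
From mathcomp Require Import all_boot all_order all_algebra.
From mathcomp Require Import all_classical all_reals.
From mathcomp Require Import ereal topology sequences exp.
From mathcomp Require Import Rstruct.
Set Implicit Arguments. Unset Strict Implicit. Unset Printing Implicit Defensive.
Import Order.TTheory GRing.Theory Num.Theory.
Local Open Scope classical_set_scope.
Local Open Scope ring_scope.

Notation RR := Rdefinitions.R.

Section LinAlg.
Variables (k : fieldType) (B : lalgType k).

(* k-linear span of a finite family: every finite-dimensional subspace is of
   this form. *)
Definition span (s : seq B) : set B :=
  [set v | exists c : 'I_(size s) -> k, v = \sum_(i < size s) c i *: s`_i].

Fixpoint words (s : seq B) (i : nat) : seq B :=
  if i is i'.+1 then [seq u * w | u <- s, w <- words s i'] else [:: 1].

Definition powsp (s : seq B) (i : nat) : set B := span (words s i).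

Definition sumpow (s : seq B) (n : nat) : set B :=
  span (flatten [seq words s i | i <- iota 0 n.+1]).

Definition has_dim (S : set B) (n : nat) : Prop :=
  (exists s : seq B, size s = n /\ span s = S) /\
  (forall s : seq B, span s = S -> (n <= size s)%N).

(* dimension of a finite-dimensional subspace (0 if not finite-dimensional,
   never used in that case) *)
Definition fdim (S : set B) : nat := xget 0%N [set n | has_dim S n].

Definition growth_log (s : seq B) (n : nat) : \bar RR :=
  ((ln (fdim (sumpow s n))%:R / ln (n%:R : RR))%R)%:E.

(* GKdim(B) = sup_V limsup_n log_n dim(sum_{i=0}^n V^i), V ranging over the
   finite-dimensional subspaces, i.e. spans of finite families. *)
Definition GKdim : \bar RR :=
  ereal_sup [set limn_esup (growth_log s) | s in [set: seq B]].

Definition regular (r : B) : Prop :=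
  forall b : B, b != 0 -> r * b != 0 /\ b * r != 0.

Definition SM (v0 : seq B) (c : RR) (d : RR) : Prop :=
  forall w : seq B,
    (exists r : B, regular r /\ forall v, v \in v0 -> span w (v * r)) ->
    forall m : nat,
      c * (fdim (span w))%:R * powR (m%:R : RR) d <= (fdim (powsp w m))%:R.

Definition sensitive_multiplicity : Prop :=
  exists (v0 : seq B) (c d : RR),
     0 < c /\ GKdim = d%:E /\ SM v0 c d.

End LinAlg.

Definition locally_algebraic (k : fieldType) (D : lalgType k) (sigma : D -> D) :=
  forall s : seq D, exists t : seq D,
    span s `<=` span t /\ (forall v, span t v -> span t (sigma v)).

(* B (with iota : D -> B, x, y) is the generalized Weyl algebra D(sigma,a):
   the k-algebra generated by D and x, y subject to the relations
   x d = sigma(d) x, y d = sigma^{-1}(d) y, y x = a, x y = sigma(a),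
   expressed by its universal property (existence and uniqueness of the
   induced algebra morphism to any k-algebra with such data). *)
Definition GWA_rels (k : fieldType) (D : comAlgType k) (C : algType k)
  (sigma sigmainv : D -> D) (a : D) (f : D -> C) (x y : C) : Prop :=
  [/\ forall d, x * f d = f (sigma d) * x,
      forall d, y * f d = f (sigmainv d) * y,
      y * x = f a & x * y = f (sigma a)].

Definition is_GWA (k : fieldType) (D : comAlgType k) (sigma sigmainv : D -> D)
  (a : D) (B : algType k) (iota : {lrmorphism D -> B}) (x y : B) : Prop :=
  GWA_rels sigma sigmainv a iota x y /\
  forall (C : algType k) (f : {lrmorphism D -> C}) (x' y' : C),
    GWA_rels sigma sigmainv a f x' y' ->
    (exists g : {lrmorphism B -> C},
        (forall d, g (iota d) = f d) /\ g x = x' /\ g y = y') /\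
    (forall g1 g2 : {lrmorphism B -> C},
        (forall d, g1 (iota d) = g2 (iota d)) -> g1 x = g2 x -> g1 y = g2 y ->
        forall b, g1 b = g2 b).

(* D(sigma,a) acts on D-valued sequences indexed by Z: x shifts them and d
   acts at position i through sigma^i(d).  Reading off the entry at -j of the
   image of the delta sequence yields linear maps psi_j with
   psi_j (iota e * x^i) = [i = j] e, so the blocks iota(E_j) x^j are
   independent.  As sigma is not locally algebraic, a finite U containing V0
   generates a strictly increasing chain L_j = U + sigma U + ... + sigma^j U,
   hence dim L_j >= j, and the sensitive multiplicity condition gives
   dim L_j^m >= c j m^d.  Since iota(L_j^m) x^j consists of words of length
   m + j in x and iota U, the words of length at most 2m + 1 span a space of
   dimension at least (c/2) m^(d+2), and the growth exponent is >= d + 2. *)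

From HB Require Import structures.
From mathcomp Require Import all_boot all_order all_algebra.
From mathcomp Require Import all_classical all_reals.
From mathcomp Require Import ereal topology sequences exp.
From mathcomp Require Import Rstruct.
From mathcomp Require Import zify lra.

Set Implicit Arguments.
Unset Strict Implicit.
Unset Printing Implicit Defensive.

Import Order.TTheory GRing.Theory Num.Theory.
Local Open Scope ring_scope.

Section LinearCombinations.
Variables (k : fieldType) (V : lmodType k).

Fixpoint lcomb (cs : seq k) (l : seq V) : V :=
  if (cs, l) is (c :: cs', v :: l') then c *: v + lcomb cs' l' else 0.

Lemma lcomb_sum cs l : lcomb cs l = \sum_(i < size l) cs`_i *: l`_i.
Proof.
elim: l cs => [|v l IH] [|c cs] /=; rewrite ?big_ord0 // big_ord_recl /=.
  by rewrite scale0r add0r big1 // => i _; rewrite scale0r.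
by rewrite IH.
Qed.

Lemma lcomb_cat cs (l1 l2 : seq V) :
  lcomb cs (l1 ++ l2) = lcomb (take (size l1) cs) l1 + lcomb (drop (size l1) cs) l2.
Proof.
elim: l1 cs => [|v l1 IH] [|c cs] /=; rewrite ?add0r ?drop0 //.
by rewrite IH addrA.
Qed.

Definition in_span (l : seq V) (v : V) := exists cs, v = lcomb cs l.

Lemma in_spanP l v :
  in_span l v <-> exists F : nat -> k, v = \sum_(i < size l) F i *: l`_i.
Proof.
split=> [[cs ->]|[F ->]]; first by exists (nth 0 cs); rewrite lcomb_sum.
exists (mkseq F (size l)); rewrite lcomb_sum; apply: eq_bigr => i _.
by rewrite nth_mkseq.
Qed.

Lemma in_span0 l : in_span l 0. Proof. by exists [::]; case: l. Qed.

Lemma in_spanD l u v : in_span l u -> in_span l v -> in_span l (u + v).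
Proof.
move=> /in_spanP[F ->] /in_spanP[G ->]; apply/in_spanP; exists (fun i => F i + G i).
by rewrite -big_split; apply: eq_bigr => i _; rewrite scalerDl.
Qed.

Lemma in_spanZ l c v : in_span l v -> in_span l (c *: v).
Proof.
move=> /in_spanP[F ->]; apply/in_spanP; exists (fun i => c * F i).
by rewrite scaler_sumr; apply: eq_bigr => i _; rewrite scalerA.
Qed.

Lemma in_span_mem l v : v \in l -> in_span l v.
Proof.
elim: l => [//|w l IH]; rewrite inE => /orP[/eqP ->|/IH [cs ->]].
  by exists [:: 1]; case: l {IH} => /=; rewrite scale1r addr0.
by exists (0 :: cs); rewrite /= scale0r add0r.
Qed.

Lemma in_span_sum l I (r : seq I) (P : pred I) (F : I -> V) :
  (forall i, P i -> in_span l (F i)) -> in_span l (\sum_(i <- r | P i) F i).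
Proof. by move=> F_l; apply: big_ind => //; [exact: in_span0 | exact: in_spanD]. Qed.

Lemma in_span_trans l t u :
  (forall v, v \in l -> in_span t v) -> in_span l u -> in_span t u.
Proof.
move=> l_t /in_spanP[F ->]; apply: in_span_sum => i _; apply/in_spanZ/l_t.
exact: mem_nth.
Qed.

Definition span_stable (f : V -> V) (t : seq V) :=
  forall v, in_span t v -> in_span t (f v).

Definition lin_indep (l : seq V) :=
  forall cs, lcomb cs l = 0 -> forall i, (i < size l)%N -> cs`_i = 0.

Lemma lin_indep_cons l v : lin_indep l -> ~ in_span l v -> lin_indep (v :: l).
Proof.
move=> indep_l v_notin [|c cs] //= comb0 i lt_i; first by rewrite nth_nil.
have c0 : c = 0.
  apply: contra_notP v_notin => /eqP c_neq0.
  have -> : v = - c^-1 *: lcomb cs l.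
    have e : c *: v = - lcomb cs l by apply/eqP; rewrite -addr_eq0 comb0.
    by rewrite scaleNr -scalerN -e scalerA mulVf // scale1r.
  by apply: in_spanZ; exists cs.
move: comb0; rewrite c0 scale0r add0r => comb0.
by case: i lt_i => [|i] //= lt_i; apply: indep_l.
Qed.

Lemma basis_exists s :
  exists b, lin_indep b /\ forall v, in_span b v <-> in_span s v.
Proof.
elim: s => [|v s [b [indep_b span_b]]]; first by exists [::].
have span_s_cons u : in_span s u -> in_span (v :: s) u.
  by apply: in_span_trans => w w_s; apply: in_span_mem; rewrite inE w_s orbT.
have [v_in|v_notin] := pselect (in_span b v).
  exists b; split => // u; split => [/span_b /span_s_cons //|].
  apply: in_span_trans => w; rewrite inE => /orP[/eqP -> //|].
  by move/in_span_mem/span_b.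
exists (v :: b); split; first exact: lin_indep_cons.
move=> u; split; apply: in_span_trans => w; rewrite inE => /orP[/eqP ->|w_in].
- by apply: in_span_mem; rewrite inE eqxx.
- by apply/span_s_cons/span_b/in_span_mem.
- by apply: in_span_mem; rewrite inE eqxx.
- apply: (@in_span_trans b); last by apply/span_b/in_span_mem.
  by move=> z z_b; apply: in_span_mem; rewrite inE z_b orbT.
Qed.

(* Steinitz: if size t < size l, the coefficient matrix of l on t has a
   nonzero left kernel vector, i.e. a vanishing nontrivial combination of l. *)
Lemma lin_indep_size_le l t :
  lin_indep l -> (forall v, v \in l -> in_span t v) -> (size l <= size t)%N.
Proof.
move=> indep_l l_sub; rewrite leqNgt; apply/negP => lt_tl.
set p := size l; set q := size t.
have /choice[G lG] : forall i : 'I_p,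
    exists F : nat -> k, l`_i = \sum_(j < q) F j *: t`_j.
  by move=> i; apply/in_spanP/l_sub/mem_nth.
pose M := \matrix_(i < p, j < q) G i j.
have /eqP/matrixP/existsNP[i0 /existsNP[j0 /eqP ker_i0j0]] :
    kermx M != 0.
  rewrite -mxrank_eq0 -lt0n mxrank_ker subn_gt0.
  exact: leq_ltn_trans (rank_leq_col M) lt_tl.
pose v := row i0 (kermx M).
have vM0 : v *m M = 0 by rewrite -row_mul mulmx_ker row0.
pose cs := [seq v 0 i | i <- enum 'I_p].
have csE (i : 'I_p) : cs`_i = v 0 i.
  by rewrite (nth_map i) ?size_enum_ord // nth_ord_enum.
have : lcomb cs l = 0.
  rewrite lcomb_sum.
  transitivity (\sum_(i < p) \sum_(j < q) (v 0 i * G i j) *: t`_j).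
    apply: eq_bigr => i _; rewrite csE lG scaler_sumr.
    by apply: eq_bigr => j _; rewrite scalerA.
  rewrite exchange_big /=; apply: big1 => j _; rewrite -scaler_suml.
  have -> : \sum_(i < p) v 0 i * G i j = (v *m M) 0 j.
    by rewrite !mxE; apply: eq_bigr => i _; rewrite !mxE.
  by rewrite vM0 mxE scale0r.
move/indep_l => /(_ j0 (ltn_ord j0)); rewrite csE mxE.
by move=> ker0; move: ker_i0j0; rewrite ker0 mxE eqxx.
Qed.

End LinearCombinations.

Section LinearImages.
Variables (k : fieldType) (V W : lmodType k) (f : {linear V -> W}).

Lemma lcomb_map cs l : f (lcomb cs l) = lcomb cs (map f l).
Proof.
elim: l cs => [|v l IH] [|c cs] /=; rewrite ?linear0 //.
by rewrite linearD linearZ IH.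
Qed.

Lemma in_span_map l v : in_span l v -> in_span (map f l) (f v).
Proof. by case=> cs ->; exists cs; rewrite lcomb_map. Qed.

(* f kills the l2 part of a vanishing combination, so its l1 coefficients
   vanish first. *)
Lemma lin_indep_cat (l1 l2 : seq V) :
  lin_indep (map f l1) -> lin_indep l2 -> (forall v, v \in l2 -> f v = 0) ->
  lin_indep (l1 ++ l2).
Proof.
move=> indep1 indep2 f_l2 cs; rewrite lcomb_cat => comb0.
have cs1_0 i : (i < size l1)%N -> (take (size l1) cs)`_i = 0.
  move=> lt_i; apply: (indep1 _ _ i); last by rewrite size_map.
  have f_lcomb2 : f (lcomb (drop (size l1) cs) l2) = 0.
    rewrite lcomb_map lcomb_sum big1 // => j _.
    have lt_j : (j < size l2)%N by rewrite -(size_map f).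
    by rewrite (nth_map 0) // f_l2 ?scaler0 // mem_nth.
  by move/(congr1 f): comb0; rewrite linearD f_lcomb2 addr0 lcomb_map linear0.
have lcomb1_0 : lcomb (take (size l1) cs) l1 = 0.
  by rewrite lcomb_sum big1 // => i _; rewrite cs1_0 ?scale0r.
move: comb0; rewrite lcomb1_0 add0r => /indep2 cs2_0 i.
rewrite size_cat => lt_i; case: (ltnP i (size l1)) => [lt_i1|le_1i].
  by rewrite -(nth_take _ lt_i1) cs1_0.
have := cs2_0 (i - size l1)%N; rewrite nth_drop subnKC //; apply.
by rewrite ltn_subLR.
Qed.

End LinearImages.

Section Dimension.
Variables (k : fieldType) (B : lalgType k).

Lemma spanE (s : seq B) : span s = in_span s.
Proof.
apply: funext => v; apply: propext; split.
  case=> c ->; apply/in_spanP; exists (fun n => odflt 0 (omap c (insub n))).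
  by apply: eq_bigr => i _; rewrite valK.
by case/in_spanP => F ->; exists (fun i => F i).
Qed.

Lemma fdim_basis (s b : seq B) :
  lin_indep b -> (forall v, in_span b v <-> in_span s v) -> fdim (span s) = size b.
Proof.
move=> indep_b span_b.
have dim_b : has_dim (span s) (size b).
  split=> [|t span_t].
    by exists b; rewrite !spanE; split=> //; apply: funext => v; apply: propext.
  apply: lin_indep_size_le => // v /in_span_mem /span_b.
  by rewrite -spanE -span_t spanE.
rewrite /fdim; case: xgetP => [n _ dim_n|]; last by move/(_ (size b)).
case: dim_n dim_b => [[t [<- span_t]] min_n] [[u [<- span_u]] min_b].
by apply/eqP; rewrite eqn_leq min_n ?min_b.
Qed.

Lemma fdim_basis_exists (s : seq B) :
  exists b, [/\ lin_indep b, size b = fdim (span s) &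
    forall v, in_span b v <-> in_span s v].
Proof.
have [b [indep_b span_b]] := basis_exists s.
by exists b; rewrite (fdim_basis indep_b span_b).
Qed.

Lemma lin_indep_size_le_fdim (s l : seq B) :
  lin_indep l -> (forall v, v \in l -> in_span s v) -> (size l <= fdim (span s))%N.
Proof.
move=> indep_l l_sub; have [b [_ <- span_b]] := fdim_basis_exists s.
by apply: lin_indep_size_le => // v /l_sub /span_b.
Qed.

Lemma fdim_mono (s t : seq B) :
  (forall u, in_span s u -> in_span t u) -> (fdim (span s) <= fdim (span t))%N.
Proof.
move=> sub_st; have [b [indep_b <- span_b]] := fdim_basis_exists s.
by apply: lin_indep_size_le_fdim => // v /in_span_mem /span_b /sub_st.
Qed.

Lemma fdim_strict (s t : seq B) v :
  (forall u, in_span s u -> in_span t u) -> in_span t v -> ~ in_span s v ->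
  (fdim (span s) < fdim (span t))%N.
Proof.
move=> sub_st vt v_notin; have [b [indep_b <- span_b]] := fdim_basis_exists s.
apply: (@lin_indep_size_le_fdim _ (v :: b)).
  by apply: lin_indep_cons => // /span_b.
by move=> w; rewrite inE => /orP[/eqP -> //|/in_span_mem /span_b /sub_st].
Qed.

End Dimension.

(* Linear endomorphisms of sequences rather than of an arbitrary space: the
   algebra structure needs 1 != 0. *)
Section SequenceEndomorphisms.
Variables (k : fieldType) (D : lalgType k).
Local Notation V := (int -> D).

Record lend := Lend { lend_fun :> V -> V; lend_linear : linear lend_fun }.

HB.instance Definition _ (S : lend) :=
  GRing.isLinear.Build k V V *:%R S (lend_linear S).
HB.instance Definition _ := gen_eqMixin lend.
HB.instance Definition _ := gen_choiceMixin lend.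

Lemma lendP (S T : lend) : S =1 T -> S = T.
Proof.
case: S T => [s sL] [t tL] /= /funext st; subst t.
by congr Lend; exact: Prop_irrelevance.
Qed.

Fact lend0_linear : linear (fun _ : V => 0 : V).
Proof. by move=> c u v; rewrite scaler0 addr0. Qed.
Fact lendN_linear (S : lend) : linear (fun v => - S v).
Proof. by move=> c u v; rewrite linearP opprD scalerN. Qed.
Fact lendD_linear (S T : lend) : linear (fun v => S v + T v).
Proof. by move=> c u v; rewrite !linearP scalerDr addrACA. Qed.
Fact lend1_linear : linear (@idfun V).
Proof. by []. Qed.
Fact lendM_linear (S T : lend) : linear (S \o T).
Proof. by move=> c u v; rewrite /= !linearP. Qed.
Fact lendZ_linear (c : k) (S : lend) : linear (fun v => c *: S v).
Proof. by move=> a u v; rewrite linearP scalerDr !scalerA mulrC. Qed.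

Definition lend0 := Lend lend0_linear.
Definition lend_opp S := Lend (lendN_linear S).
Definition lend_add S T := Lend (lendD_linear S T).
Definition lend1 := Lend lend1_linear.
Definition lend_mul S T := Lend (lendM_linear S T).
Definition lend_scale c S := Lend (lendZ_linear c S).

Fact lend_addA : associative lend_add.
Proof. by move=> S T U; apply: lendP => v; apply: addrA. Qed.
Fact lend_addC : commutative lend_add.
Proof. by move=> S T; apply: lendP => v; apply: addrC. Qed.
Fact lend_add0 : left_id lend0 lend_add.
Proof. by move=> S; apply: lendP => v; apply: add0r. Qed.
Fact lend_addN : left_inverse lend0 lend_opp lend_add.
Proof. by move=> S; apply: lendP => v; apply: addNr. Qed.
HB.instance Definition _ :=
  GRing.isZmodule.Build lend lend_addA lend_addC lend_add0 lend_addN.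

Fact lend_mulA : associative lend_mul. Proof. by move=> *; apply: lendP. Qed.
Fact lend_mul1 : left_id lend1 lend_mul. Proof. by move=> *; apply: lendP. Qed.
Fact lend_mulr1 : right_id lend1 lend_mul. Proof. by move=> *; apply: lendP. Qed.
Fact lend_mulDl : left_distributive lend_mul lend_add.
Proof. by move=> *; apply: lendP. Qed.
Fact lend_mulDr : right_distributive lend_mul lend_add.
Proof. by move=> S T U; apply: lendP => v /=; rewrite linearD. Qed.
Fact lend1_neq0 : lend1 != lend0.
Proof.
apply/eqP => /(congr1 (fun S : lend => S (fun=> 1) 0)) /=.
by apply/eqP; rewrite oner_eq0.
Qed.
HB.instance Definition _ := GRing.Zmodule_isNzRing.Build lend
  lend_mulA lend_mul1 lend_mulr1 lend_mulDl lend_mulDr lend1_neq0.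

Fact lend_scaleA a b S : lend_scale a (lend_scale b S) = lend_scale (a * b) S.
Proof. by apply: lendP => v; apply: scalerA. Qed.
Fact lend_scale1 : left_id 1 lend_scale.
Proof. by move=> S; apply: lendP => v; apply: scale1r. Qed.
Fact lend_scaleDr : right_distributive lend_scale +%R.
Proof. by move=> c S T; apply: lendP => v; apply: scalerDr. Qed.
Fact lend_scaleDl S : {morph lend_scale^~ S : a b / a + b}.
Proof. by move=> a b; apply: lendP => v; apply: scalerDl. Qed.
HB.instance Definition _ := GRing.Zmodule_isLmodule.Build k lend
  lend_scaleA lend_scale1 lend_scaleDr lend_scaleDl.

Fact lend_scaleAl (c : k) (S T : lend) : c *: (S * T) = (c *: S) * T.
Proof. by apply: lendP. Qed.
HB.instance Definition _ := GRing.Lmodule_isLalgebra.Build k lend lend_scaleAl.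
Fact lend_scaleAr (c : k) (S T : lend) : c *: (S * T) = S * (c *: T).
Proof. by apply: lendP => v /=; rewrite linearZ. Qed.
HB.instance Definition _ := GRing.Lalgebra_isAlgebra.Build k lend lend_scaleAr.

End SequenceEndomorphisms.

(* Packing the inverse keeps the canonical morphism structures on the powers
   [spow] below independent of the cancellation hypotheses. *)
Definition inv_lrmorphism (k : fieldType) (D : lalgType k)
    (f : {lrmorphism D -> D}) (g : D -> D) (fK : cancel f g) (gK : cancel g f) :
    {lrmorphism D -> D} :=
  HB.pack g (GRing.isZmodMorphism.Build D D g (can2_zmod_morphism fK gK))
    (GRing.isMonoidMorphism.Build D D g (can2_monoid_morphism fK gK))
    (GRing.isScalable.Build k D D *:%R g (can2_scalable fK gK)).

Section ShiftRepresentation.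
Variables (k : fieldType) (D : comAlgType k) (sigma sigmainv : {lrmorphism D -> D}).
Variables (sigmaK : cancel sigma sigmainv) (sigmainvK : cancel sigmainv sigma).
Variable a : D.

Definition spow (z : int) : D -> D :=
  match z with Posz n => iter n sigma | Negz n => iter n.+1 sigmainv end.

Fact spow_is_zmod_morphism z : zmod_morphism (spow z).
Proof.
have iterB (f : {lrmorphism D -> D}) n : zmod_morphism (iter n f).
  by elim: n => // n IH u v /=; rewrite IH raddfB.
by case: z => n; apply: iterB.
Qed.
Fact spow_is_monoid_morphism z : monoid_morphism (spow z).
Proof.
have iterM (f : {lrmorphism D -> D}) n : monoid_morphism (iter n f).
  by elim: n => // n [IH1 IHM]; split=> [|u v] /=; rewrite ?IH1 ?IHM ?rmorph1 ?rmorphM.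
by case: z => n; apply: iterM.
Qed.
Fact spow_is_scalable z : scalable (spow z).
Proof.
have iterZ (f : {lrmorphism D -> D}) n : scalable (iter n f).
  by elim: n => // n IH c u /=; rewrite IH linearZ.
by case: z => n; apply: iterZ.
Qed.
HB.instance Definition _ z :=
  GRing.isZmodMorphism.Build D D (spow z) (spow_is_zmod_morphism z).
HB.instance Definition _ z :=
  GRing.isMonoidMorphism.Build D D (spow z) (spow_is_monoid_morphism z).
HB.instance Definition _ z :=
  GRing.isScalable.Build k D D *:%R (spow z) (spow_is_scalable z).

Lemma spowS z d : spow (z + 1) d = spow z (sigma d).
Proof.
case: z => [n|[|n]].
- by rewrite -[Posz n + 1]/(Posz (n + 1)) addn1 /= -iterSr.
- by rewrite /= sigmaK.
- by rewrite /= subn1 /= -[sigmainv (iter n _ (sigma d))]iterS iterSr sigmaK.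
Qed.

Lemma spowV z d : spow z (sigmainv d) = spow (z - 1) d.
Proof. by rewrite -{1}(subrK 1 z) spowS sigmainvK. Qed.

Lemma spowNK (j : nat) e : spow j (spow (- j%:Z) e) = e.
Proof.
case: j => [//|j]; rewrite [spow (- _)]/= [spow _]/=.
by elim: j.+1 e => [//|n IH] e; rewrite iterSr iterS sigmainvK IH.
Qed.

Fact act_d_fun_linear (d : D) : linear (fun (F : int -> D) i => spow i d * F i).
Proof. by move=> c F G; apply/funext => i; rewrite !fctE mulrDr scalerAr. Qed.
Definition act_d (d : D) : lend D := Lend (act_d_fun_linear d).

Fact act_d_is_zmod_morphism : zmod_morphism act_d.
Proof.
by move=> u v; apply: lendP => F; apply/funext => i /=; rewrite rmorphB mulrBl.
Qed.
Fact act_d_is_monoid_morphism : monoid_morphism act_d.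
Proof.
split=> [|u v]; apply: lendP => F; apply/funext => i /=.
  by rewrite rmorph1 mul1r.
by rewrite rmorphM mulrA.
Qed.
Fact act_d_is_scalable : scalable act_d.
Proof.
by move=> c u; apply: lendP => F; apply/funext => i; rewrite /= !fctE linearZ scalerAl.
Qed.
HB.instance Definition _ :=
  GRing.isZmodMorphism.Build D (lend D) act_d act_d_is_zmod_morphism.
HB.instance Definition _ :=
  GRing.isMonoidMorphism.Build D (lend D) act_d act_d_is_monoid_morphism.
HB.instance Definition _ :=
  GRing.isScalable.Build k D (lend D) *:%R act_d act_d_is_scalable.

Fact act_x_linear : linear (fun (F : int -> D) i => F (i + 1)).
Proof. by []. Qed.
Definition act_x : lend D := Lend act_x_linear.

Fact act_y_linear : linear (fun (F : int -> D) i => spow i a * F (i - 1)).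
Proof. by move=> c F G; apply/funext => i; rewrite !fctE mulrDr scalerAr. Qed.
Definition act_y : lend D := Lend act_y_linear.

Lemma act_xX n (F : int -> D) i : (act_x ^+ n) F i = F (i + n).
Proof.
elim: n F i => [|n IH] F i; first by rewrite expr0 addr0.
by rewrite exprS /= IH intS addrA.
Qed.

Lemma shift_GWA_rels : GWA_rels sigma sigmainv a act_d act_x act_y.
Proof.
split=> [d|d||]; apply: lendP => F; apply/funext => i /=.
- by rewrite spowS.
- by rewrite spowV mulrCA.
- by rewrite subrK.
- by rewrite addrK spowS.
Qed.

Section CoefficientFunctionals.
Variables (B : algType k) (iota : {lrmorphism D -> B}) (x : B).
Variables (g : {lrmorphism B -> lend D}).
Hypotheses (g_iota : forall d, g (iota d) = act_d d) (g_x : g x = act_x).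

Definition coef (j : nat) (b : B) : D := spow j (g b (fun z => (z == 0)%:R) (- j%:Z)).

Fact coef_is_linear j : linear (coef j).
Proof. by move=> c u v; rewrite /coef -linearP [g _]linearP. Qed.
HB.instance Definition _ j :=
  GRing.isLinear.Build k B D *:%R (coef j) (coef_is_linear j).

Lemma coef_iota_mulX j i e : coef j (iota e * x ^+ i) = if i == j then e else 0.
Proof.
rewrite /coef; have -> : g (iota e * x ^+ i) = act_d e * act_x ^+ i.
  by rewrite -g_iota -g_x rmorphM rmorphXn.
rewrite [_ (- _)]/= act_xX addrC subr_eq0 eqz_nat.
by case: eqP => _; rewrite ?mulr1 ?spowNK // mulr0 raddf0.
Qed.

End CoefficientFunctionals.

End ShiftRepresentation.

Lemma GWA_coefficients (k : fieldType) (D : comAlgType k)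
  (sigma : {lrmorphism D -> D}) (sigmainv : D -> D)
  (sigmaK : cancel sigma sigmainv) (sigmainvK : cancel sigmainv sigma)
  (a : D) (B : algType k) (iota : {lrmorphism D -> B}) (x y : B) :
  is_GWA sigma sigmainv a iota x y ->
  exists psi : nat -> {linear B -> D},
    forall j i e, psi j (iota e * x ^+ i) = if i == j then e else 0.
Proof.
pose tau := inv_lrmorphism sigmaK sigmainvK.
case=> _ /(_ _ _ _ _ (@shift_GWA_rels _ _ sigma tau sigmaK sigmainvK a)).
move=> [[g [g_iota [g_x _]]] _].
exists (coef sigma tau g).
exact: (@coef_iota_mulX _ _ sigma tau sigmainvK _ _ _ _ g_iota g_x).
Qed.

Section Words.
Variables (k : fieldType) (B : algType k).

Lemma words_mul (s : seq B) m n u w :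
  u \in words s m -> w \in words s n -> u * w \in words s (m + n).
Proof.
elim: m u => [|m IH] u /=; first by rewrite inE => /eqP -> wn; rewrite mul1r.
case/allpairsP => [[u1 u2] [/= u1s u2m ->]] wn.
by rewrite -mulrA; apply: allpairs_f => //; apply: IH.
Qed.

Lemma in_span_words_mul (s : seq B) m n u w :
  in_span (words s m) u -> in_span (words s n) w -> in_span (words s (m + n)) (u * w).
Proof.
move=> /in_spanP[F ->] /in_spanP[G ->].
rewrite mulr_suml; apply: in_span_sum => i _.
rewrite mulr_sumr; apply: in_span_sum => j _.
rewrite -scalerAl -scalerAr; apply/in_spanZ/in_spanZ/in_span_mem.
by apply: words_mul; apply: mem_nth.
Qed.

Lemma in_span_words_sumpow (s : seq B) n N v : (n <= N)%N ->
  in_span (words s n) v -> in_span (flatten [seq words s i | i <- iota 0 N.+1]) v.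
Proof.
move=> le_nN; apply: in_span_trans => u un; apply/in_span_mem/flatten_mapP.
by exists n => //; rewrite mem_iota add0n ltnS.
Qed.

Lemma fdim_sumpow_mono (s : seq B) :
  {homo (fun n => fdim (sumpow s n)) : n N / (n <= N)%N}.
Proof.
move=> n N le_nN; apply: fdim_mono => v; apply: in_span_trans => u /flatten_mapP[i].
rewrite mem_iota add0n ltnS => le_in u_i.
exact/(in_span_words_sumpow (leq_trans le_in le_nN))/in_span_mem.
Qed.

End Words.

Section OrbitFiltration.
Variables (k : fieldType) (D : lalgType k) (sigma : {linear D -> D}) (U : seq D).

Fixpoint orbit_gens (j : nat) : seq D :=
  if j is j'.+1 then U ++ map sigma (orbit_gens j') else U.

Lemma orbit_gens_U j v : v \in U -> in_span (orbit_gens j) v.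
Proof. by case: j => [|j] vU; apply: in_span_mem; rewrite //= mem_cat vU. Qed.

Lemma orbit_gens_sigma j v :
  in_span (orbit_gens j) v -> in_span (orbit_gens j.+1) (sigma v).
Proof.
move=> /(in_span_map sigma); apply: in_span_trans => w w_in.
by apply: in_span_mem; rewrite /= mem_cat w_in orbT.
Qed.

Lemma orbit_gens_succ j v :
  in_span (orbit_gens j) v -> in_span (orbit_gens j.+1) v.
Proof.
elim: j v => [|j IH] v; apply: in_span_trans => w; first exact: orbit_gens_U.
rewrite mem_cat => /orP[/orbit_gens_U //|/mapP[w' w'_in ->]].
exact/orbit_gens_sigma/IH/in_span_mem.
Qed.

Hypothesis U_unbounded : forall t : seq D,
  (forall v, v \in U -> in_span t v) -> ~ span_stable sigma t.

(* Otherwise orbit_gens j would span a sigma-stable subspace containing U. *)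
Lemma fdim_orbit_gens j : (j <= fdim (span (orbit_gens j)))%N.
Proof.
elim: j => // j IH; apply: leq_ltn_trans IH _.
have [v [vj1 vj]] : exists v, in_span (orbit_gens j.+1) v /\ ~ in_span (orbit_gens j) v.
  apply: contra_notP (U_unbounded (@orbit_gens_U j)) => no_new v /orbit_gens_sigma v_in.
  by apply: contra_notP no_new => v_notin; exists (sigma v).
exact: fdim_strict (@orbit_gens_succ j) vj1 vj.
Qed.

End OrbitFiltration.

Section GradedWords.
Variables (k : fieldType) (D : comAlgType k) (sigma : {lrmorphism D -> D}).
Variables (B : algType k) (iota : {lrmorphism D -> B}) (x : B) (U : seq D).
Hypothesis x_iota : forall d, x * iota d = iota (sigma d) * x.

Definition gwa_gens : seq B := x :: map iota U.

Lemma in_span_words_gens1 v : v \in gwa_gens -> in_span (words gwa_gens 1) v.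
Proof. by move=> v_in; apply: in_span_mem; rewrite -[v]mulr1 allpairs_f ?inE. Qed.

Lemma iota_words_in m e :
  e \in words U m -> in_span (words gwa_gens m) (iota e).
Proof.
elim: m e => [|m IH] e.
  by rewrite /= inE => /eqP ->; rewrite rmorph1; apply: in_span_mem; rewrite inE.
move=> e_in; rewrite -add1n; case/allpairsP: e_in => -[u w] [uU wm ->].
rewrite rmorphM.
apply: in_span_words_mul; last exact: IH.
by apply: in_span_words_gens1; rewrite inE map_f ?orbT.
Qed.

Lemma words_orbit_gens_succ j m e : e \in words (orbit_gens sigma U j.+1) m ->
  exists m0 m1 e0 e1, [/\ (m0 + m1)%N = m, e0 \in words U m0,
    e1 \in words (orbit_gens sigma U j) m1 & e = e0 * sigma e1].
Proof.
elim: m e => [|m IH] e /=.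
  by rewrite inE => /eqP ->; exists 0%N, 0%N, 1, 1; rewrite rmorph1 mulr1 !inE.
case/allpairsP => [[u w] [/= uj wm ->]].
have [m0 [m1 [e0 [e1 [<- e0m0 e1m1 ->]]]]] := IH _ wm.
move: uj; rewrite mem_cat => /orP[uU|/mapP[u' u'j ->]].
  by exists m0.+1, m1, (u * e0), e1; rewrite addSn mulrA; split=> //; apply: allpairs_f.
exists m0, m1.+1, e0, (u' * e1); rewrite addnS rmorphM mulrCA; split=> //.
exact: allpairs_f.
Qed.

Lemma iota_orbit_words_mulX j m e : e \in words (orbit_gens sigma U j) m ->
  in_span (words gwa_gens (m + j)) (iota e * x ^+ j).
Proof.
elim: j m e => [|j IH] m e e_in.
  by rewrite expr0 mulr1 addn0; apply: iota_words_in.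
have [m0 [m1 [e0 [e1 [<- e0m0 e1m1 ->]]]]] := words_orbit_gens_succ e_in.
have -> : iota (e0 * sigma e1) * x ^+ j.+1 = iota e0 * x * (iota e1 * x ^+ j).
  by rewrite rmorphM exprS !mulrA -(mulrA (iota e0) x) x_iota mulrA.
rewrite (_ : m0 + m1 + j.+1 = m0 + 1 + (m1 + j))%N; last first.
  by rewrite addn1 addSn addnS addnA.
apply: in_span_words_mul; last exact: IH.
apply: in_span_words_mul; first exact: iota_words_in.
by apply: in_span_words_gens1; rewrite inE eqxx.
Qed.

Lemma iota_orbit_span_mulX j m e : in_span (words (orbit_gens sigma U j) m) e ->
  in_span (words gwa_gens (m + j)) (iota e * x ^+ j).
Proof.
move=> /(in_span_map ((x ^+ j) \o* iota)); apply: in_span_trans => _ /mapP[e' e'_in ->].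
exact: iota_orbit_words_mulX.
Qed.

Variable psi : nat -> {linear B -> D}.
Hypothesis psi_iota_mulX :
  forall j i e, psi j (iota e * x ^+ i) = if i == j then e else 0.

(* Newest block first, so that psi J separates it from the older ones. *)
Fixpoint graded_family (bs : nat -> seq D) (J : nat) : seq B :=
  if J is J'.+1 then map ((x ^+ J') \o* iota) (bs J') ++ graded_family bs J' else [::].

Lemma graded_familyP bs J v : v \in graded_family bs J ->
  exists i e, [/\ (i < J)%N, e \in bs i & v = iota e * x ^+ i].
Proof.
elim: J => [//|J IH]; rewrite mem_cat => /orP[/mapP[e e_in ->]|/IH].
  by exists J, e.
by case=> i [e [lt_iJ e_in ->]]; exists i, e; rewrite ltnS ltnW.
Qed.

Lemma lin_indep_graded_family bs J :
  (forall j, lin_indep (bs j)) -> lin_indep (graded_family bs J).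
Proof.
move=> indep_bs; elim: J => // J IH.
apply: (lin_indep_cat (f := psi J)) => //.
  rewrite -map_comp (eq_map (g := id)) ?map_id // => e.
  by rewrite /= psi_iota_mulX eqxx.
move=> v /graded_familyP[i [e [lt_iJ _ ->]]]; rewrite psi_iota_mulX.
by case: eqP lt_iJ => // ->; rewrite ltnn.
Qed.

Lemma size_graded_family bs J :
  size (graded_family bs J) = (\sum_(j < J) size (bs j))%N.
Proof.
elim: J => [|J IH] /=; first by rewrite big_ord0.
by rewrite size_cat size_map IH big_ord_recr /= addnC.
Qed.

Lemma sum_fdim_powsp_le m J :
  (\sum_(j < J) fdim (powsp (orbit_gens sigma U j) m)
     <= fdim (sumpow gwa_gens (m + J)))%N.
Proof.
have [bs bsP] := choice (fun j => fdim_basis_exists (words (orbit_gens sigma U j) m)).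
have -> : (\sum_(j < J) fdim (powsp (orbit_gens sigma U j) m))%N =
    size (graded_family bs J).
  by rewrite size_graded_family; apply: eq_bigr => j _; case: (bsP j).
apply: lin_indep_size_le_fdim.
  by apply: lin_indep_graded_family => j; case: (bsP j).
move=> _ /graded_familyP[i [e [lt_iJ e_in ->]]].
apply: (@in_span_words_sumpow _ _ _ (m + i)); first by rewrite leq_add2l ltnW.
by apply: iota_orbit_span_mulX; case: (bsP i) => _ _ <-; apply: in_span_mem.
Qed.

End GradedWords.

Section LogarithmicGrowth.

Lemma limn_esup_ge_sub_ln (u : nat -> \bar RR) (L K : RR) (N0 : nat) :
  (forall N, (N0 <= N)%N -> ((L - K / ln (N%:R : RR))%:E <= u N)%E) ->
  (L%:E <= limn_esup u)%E.
Proof.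
move=> u_ge; apply: le_ereal_inf_tmp => _ [V [N1 _ N1V] <-].
apply/lee_addgt0Pr => e e_gt0.
pose n := maxn (maxn N0 N1) (maxn 2 (Num.truncn (expR (K / e))).+1).
have [N0n N1n n_gt1 n_ge] : [/\ (N0 <= n)%N, (N1 <= n)%N, (1 < n)%N &
    ((Num.truncn (expR (K / e))).+1 <= n)%N] by rewrite /n; split; lia.
have ln_gt0 : (0 : RR) < ln (n%:R : RR) by rewrite ln_gt0 ?ltr1n.
have K_le : K / ln (n%:R : RR) <= e.
  rewrite ler_pdivrMr // -ler_pdivrMl // mulrC -{1}(expRK (K / e)).
  rewrite ler_ln ?posrE ?expR_gt0 ?ltr0n 1?ltnW //.
  by apply: le_trans (ltW (truncnS_gt _)) _; rewrite ler_nat.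
apply: le_trans (_ : (L - K / ln (n%:R : RR))%:E + e%:E <= _)%E.
  by rewrite -EFinD lee_fin -addrA lerDl addrC subr_ge0.
apply/leeD2r/(le_trans (u_ge _ N0n)).
by apply: ereal_sup_ubound; exists n => //; apply: N1V.
Qed.

Lemma ln_ratio_ge_sub (P : nat -> nat) (c e : RR) : 0 < c ->
  {homo P : n N / (n <= N)%N} ->
  (forall m, (1 <= m)%N -> c * powR m%:R e <= (P m.*2.+1)%:R) ->
  exists K, forall N, (4 <= N)%N ->
    e - K / ln (N%:R : RR) <= ln ((P N)%:R : RR) / ln (N%:R : RR).
Proof.
move=> c_gt0 P_mono P_ge; exists (`|e| * ln 4 - ln c) => N N_ge4.
pose m := (N.-1)./2.
have [m_ge1 mN Nm] : [/\ (1 <= m)%N, (m.*2.+1 <= N)%N & (N <= 4 * m)%N].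
  by rewrite /m; split; lia.
have m_gt0 : (0 : RR) < m%:R by rewrite ltr0n.
have N_gt0 : (0 : RR) < N%:R by rewrite ltr0n; lia.
have lnN_gt0 : (0 : RR) < ln (N%:R : RR) by apply: ln_gt0; rewrite ltr1n; lia.
have cm_gt0 : 0 < c * powR m%:R e by rewrite mulr_gt0 ?powR_gt0.
have lnP_ge : ln c + e * ln (m%:R : RR) <= ln ((P N)%:R : RR).
  have PN_ge : c * powR m%:R e <= (P N)%:R.
    by apply: le_trans (P_ge _ m_ge1) _; rewrite ler_nat P_mono.
  by rewrite -ln_powR -lnM ?posrE ?powR_gt0 // ler_ln ?posrE ?(lt_le_trans cm_gt0).
have ln_mN : ln (m%:R : RR) <= ln (N%:R : RR).
  by rewrite ler_ln ?posrE // ler_nat; lia.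
have ln_Nm : ln (N%:R : RR) <= ln 4 + ln (m%:R : RR).
  by rewrite -lnM ?posrE // ler_ln ?posrE ?mulr_gt0 // -natrM ler_nat.
have e_ln : e * ln (N%:R : RR) - `|e| * ln 4 <= e * ln (m%:R : RR).
  by have [e_ge0|e_lt0] := leP 0 e; [rewrite ger0_norm | rewrite ltr0_norm]; nra.
rewrite ler_pdivlMr // mulrBl divfK ?gt_eqF //; lra.
Qed.

Lemma limn_esup_ln_ratio_ge (P : nat -> nat) (c e : RR) : 0 < c ->
  {homo P : n N / (n <= N)%N} ->
  (forall m, (1 <= m)%N -> c * powR m%:R e <= (P m.*2.+1)%:R) ->
  (e%:E <= limn_esup (fun N => (ln ((P N)%:R : RR) / ln (N%:R : RR))%:E))%E.
Proof.
move=> c_gt0 P_mono P_ge; have [K K_ge] := ln_ratio_ge_sub c_gt0 P_mono P_ge.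
by apply: (@limn_esup_ge_sub_ln _ _ K 4) => N N_ge4; rewrite lee_fin K_ge.
Qed.

End LogarithmicGrowth.

Lemma not_locally_algebraicP (k : fieldType) (D : lalgType k) (sigma : D -> D) :
  ~ locally_algebraic sigma ->
  exists s : seq D, forall t : seq D,
    (forall v, v \in s -> in_span t v) -> ~ span_stable sigma t.
Proof.
move=> not_la; apply: contra_notP not_la => /forallNP bounded s.
have /existsNP[t /not_implyP[s_t /contrapT t_stable]] := bounded s.
by exists t; split=> v; rewrite !spanE; [exact: in_span_trans | exact: t_stable].
Qed.

Section GWAGrowth.
Variables (k : fieldType) (D : comAlgType k) (sigma : {lrmorphism D -> D}).
Variables (B : algType k) (iota : {lrmorphism D -> B}) (x : B) (U : seq D).
Hypothesis x_iota : forall d, x * iota d = iota (sigma d) * x.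
Variable psi : nat -> {linear B -> D}.
Hypothesis psi_iota_mulX :
  forall j i e, psi j (iota e * x ^+ i) = if i == j then e else 0.
Hypothesis U_unbounded : forall t : seq D,
  (forall v, v \in U -> in_span t v) -> ~ span_stable sigma t.
Variables (v0 : seq D) (c d : RR).
Hypotheses (v0_U : forall v, v \in v0 -> v \in U) (SM_D : SM v0 c d) (c_gt0 : 0 < c).

Lemma fdim_powsp_orbit_gens j m :
  c * j%:R * powR m%:R d <= (fdim (powsp (orbit_gens sigma U j) m))%:R.
Proof.
apply: le_trans (SM_D _ m); last first.
  exists 1; split=> [b b_neq0|v /v0_U]; first by rewrite mul1r mulr1.
  by rewrite mulr1 spanE; apply: orbit_gens_U.
rewrite ler_wpM2r ?powR_ge0 // ler_wpM2l ?(ltW c_gt0) // ler_nat.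
exact: fdim_orbit_gens.
Qed.

Lemma fdim_sumpow_gwa_gens_ge m : (1 <= m)%N ->
  c / 2 * powR m%:R (d + 2) <= (fdim (sumpow (gwa_gens iota x U) m.*2.+1))%:R.
Proof.
move=> m_ge1.
have powRD2 : powR m%:R (d + 2) = powR m%:R d * m%:R ^+ 2.
  rewrite powRD; last by rewrite pnatr_eq0 -lt0n m_ge1 implybT.
  by congr (_ * _); apply: powR_mulrn.
have sum_ge n : (n ^ 2 <= 2 * \sum_(j < n.+1) j)%N.
  by rewrite -(big_mkord xpredT (fun i => i)) bin2_sum bin2 /=; nia.
apply: le_trans (_ : \sum_(j < m.+1) c * j%:R * powR m%:R d <= _).
  have -> : \sum_(j < m.+1) c * j%:R * powR m%:R d =
      c * powR m%:R d * (\sum_(j < m.+1) j)%:R.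
    by rewrite natr_sum mulr_sumr; apply: eq_bigr => j _; rewrite mulrAC.
  have sq_le : m%:R ^+ 2 <= 2 * (\sum_(j < m.+1) j)%:R :> RR.
    by rewrite -natrX -natrM ler_nat.
  have cp_ge0 : 0 <= c * powR m%:R d by rewrite mulr_ge0 ?powR_ge0 ?ltW.
  rewrite powRD2; nra.
apply: le_trans
  (_ : \sum_(j < m.+1) ((fdim (powsp (orbit_gens sigma U j) m))%:R : RR) <= _).
  by apply: ler_sum => j _; apply: fdim_powsp_orbit_gens.
rewrite -natr_sum ler_nat -addnn -addnS.
exact: (sum_fdim_powsp_le U x_iota psi_iota_mulX m m.+1).
Qed.

End GWAGrowth.

Theorem lemma2p3 (k : fieldType) (D : comAlgType k)
  (sigma : {lrmorphism D -> D}) (sigmainv : D -> D)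
  (sigmaK : cancel sigma sigmainv) (sigmainvK : cancel sigmainv sigma)
  (a : D) (B : algType k) (iota : {lrmorphism D -> B}) (x y : B) :
  sensitive_multiplicity D ->
  ~ locally_algebraic sigma ->
  is_GWA sigma sigmainv a iota x y ->
  (GKdim B >= GKdim D + 2%:E)%E.
Proof.
move=> [v0 [c [d [c_gt0 [GKdimD SM_D]]]]] not_la GWA.
have [psi psi_iota_mulX] := GWA_coefficients sigmaK sigmainvK GWA.
have x_iota : forall d, x * iota d = iota (sigma d) * x by case: GWA => -[].
have [s0 s0_unbounded] := not_locally_algebraicP not_la.
pose U := v0 ++ s0.
have U_unbounded t : (forall v, v \in U -> in_span t v) -> ~ span_stable sigma t.
  by move=> U_t; apply: s0_unbounded => v v_s0; apply: U_t; rewrite mem_cat v_s0 orbT.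
have v0_U v : v \in v0 -> v \in U by rewrite mem_cat => ->.
rewrite GKdimD -EFinD; apply: le_trans (ereal_sup_ubound _); last first.
  by exists (gwa_gens iota x U).
apply: (@limn_esup_ln_ratio_ge _ (c / 2)); first by rewrite divr_gt0.
  exact: fdim_sumpow_mono.
exact (fdim_sumpow_gwa_gens_ge x_iota psi_iota_mulX U_unbounded v0_U SM_D c_gt0).
Qed.
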